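(* Let $\epsilon\ge0$ and let $Q:\mathbb{R}\to\Delta(\mathbb{R})$ be a mechanism of the form $Qu=u+V$, where $V$ is a real random variable with distribution independent of $u$. If $Q$ is $\epsilon$-Lipschitz private with respect to the metric $|u-u'|$ on $\mathbb{R}$, then $V$ possesses a density (its distribution is absolutely continuous with respect to Lebesgue measure).
   Context: $\Delta(\mathbb{R})$ denotes the set of Borel probability measures on $\mathbb{R}$. A mechanism $Q:\mathbb{R}\to\Delta(\mathbb{R})$ is $\epsilon$-Lipschitz private if for all $u,u'\in\mathbb{R}$ and all Borel $\mathcal{S}\subseteq\mathbb{R}$, $|\ln\mathbb{P}(Qu\in\mathcal{S})-\ln\mathbb{P}(Qu'\in\mathcal{S})|\le\epsilon|u-u'|$, equivalently $\mathbb{P}(Qu\in\mathcal{S})\le e^{\epsilon|u-u'|}\mathbb{P}(Qu'\in\mathcal{S})$. *)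

From HB Require Import structures.
From mathcomp Require Import all_boot all_order all_algebra.
From mathcomp Require Import all_classical all_reals all_analysis.
Set Implicit Arguments. Unset Strict Implicit. Unset Printing Implicit Defensive.
Import Order.TTheory GRing.Theory Num.Theory.
Local Open Scope classical_set_scope.
Local Open Scope ring_scope.

(* A mechanism Q : R -> Delta(R), each Q u being a probability measure on the
   Borel sets of R, given as set functions. *)
Definition lipschitz_private (R : realType) (eps : R)
  (Q : R -> set (measurableTypeR R) -> \bar R) : Prop :=
  forall (u u' : R) (S : set (measurableTypeR R)), measurable S ->
    (Q u S <= (expR (eps * `|u - u'|))%:E * Q u' S)%E.

(* The additive-noise mechanism Q u = u + V where V has distribution P:
   Q u S = P (V in S) = P {v | u + v \in S}. *)
Definition additive_mechanism (R : realType)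
  (P : probability (measurableTypeR R) R) (u : R) : set (measurableTypeR R) -> \bar R :=
  pushforward P (fun v : measurableTypeR R => u + v).

From HB Require Import structures.
From mathcomp Require Import all_boot all_order all_algebra.
From mathcomp Require Import all_classical all_reals all_analysis.
From mathcomp Require Import measurable_realfun.
Import Order.TTheory GRing.Theory Num.Theory.
Local Open Scope classical_set_scope.
Local Open Scope ring_scope.

(* If V charged a Lebesgue-null Borel set N, privacy between the inputs 0 and y
   would give P(N) <= e^eps P(N - y) for every y in [0, 1].  Integrating in y
   over [0, 1] and exchanging the integrals (Tonelli on {(x, y) | x + y in N}),
   the right-hand side is bounded by e^eps times the P-average of the Lebesgue
   measures of the translates N - x, which all vanish. *)

Lemma lebesgue_measure_shift {R : realType} (c : R) (A : set (measurableTypeR R)) :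
  measurable A ->
  lebesgue_measure ((fun x : measurableTypeR R => x + c) @^-1` A) = lebesgue_measure A.
Proof.
move=> mA; apply/esym.
pose shift := fun x : measurableTypeR R => (x + c : measurableTypeR R).
unshelve apply: (@lebesgue_measure_unique R (pushforward lebesgue_measure shift) _ A mA).
  exact: measurable_funD.
move=> mshift X /ocitvP [->|[[a b]/= ab ->]]; first by rewrite !measure0.
rewrite /pushforward.
have -> : shift @^-1` `]a, b]%classic = `](a - c), (b - c)]%classic.
  by apply/seteqP; split => x /=; rewrite !in_itv /= ?ltrBlDr ?lerBrDr.
rewrite !lebesgue_measure_itv /= !lte_fin ab ltrD2r ab.
by rewrite -!EFinD opprB addrA subrK.
Qed.

Section shift_null.
Context {R : realType} (mu : {sigma_finite_measure set (measurableTypeR R) -> \bar R}).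
Variable N : set (measurableTypeR R).
Hypothesis mN : measurable N.

Let T := measurableTypeR R.
Let A : set (T * T) := [set p | N (p.2 + p.1)].

Let mA : measurable A.
Proof.
have /= := @measurable_funD _ _ T setT snd fst measurable_snd measurable_fst.
by move=> /(_ measurableT N mN); rewrite setTI.
Qed.

Let ysectionA y : ysection A y = (fun x : T => y + x) @^-1` N.
Proof. by apply/seteqP; split => x /=; rewrite /ysection /A /= inE. Qed.

Lemma measurable_fun_measure_shift :
  measurable_fun [set: T] (fun y : T => mu ((fun x : T => y + x) @^-1` N)).
Proof.
have -> : (fun y : T => mu ((fun x : T => y + x) @^-1` N)) = mu \o ysection A.
  by apply/funext => y /=; rewrite ysectionA.
exact: measurable_fun_ysection.
Qed.

Lemma integral_measure_shift_null : lebesgue_measure N = 0 ->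
  (\int[lebesgue_measure]_y mu ((fun x : T => (y + x)%R) @^-1` N) = 0)%E.
Proof.
move=> N0; have := indic_fubini_tonelli mu lebesgue_measure mA.
rewrite indic_fubini_tonelli_FE // indic_fubini_tonelli_GE //.
under [X in _ = X -> _]eq_integral do rewrite /= ysectionA.
move=> <-.
apply: integral0_eq => x _ /=; rewrite -N0 -(lebesgue_measure_shift x N mN).
by congr lebesgue_measure; apply/seteqP; split => y /=; rewrite /xsection /A /= inE.
Qed.

End shift_null.

Lemma additive_mechanism_shift_le {R : realType} {eps : R}
    {P : probability (measurableTypeR R) R} :
  lipschitz_private eps (additive_mechanism P) ->
  forall (y : R) (N : set (measurableTypeR R)), measurable N ->
  (P N <= (expR (eps * `|y|))%:E * P ((fun x : measurableTypeR R => (y + x)%R) @^-1` N))%E.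
Proof.
move=> privQ y N mN; have := privQ 0 y N mN.
rewrite /additive_mechanism /pushforward sub0r normrN.
by under eq_fun do rewrite add0r.
Qed.

Lemma le_integral_itv01 {R : realType} {c : \bar R} {g : measurableTypeR R -> \bar R} :
  (0 <= c)%E -> measurable_fun (`[0%R, 1%R] : set (measurableTypeR R)) g ->
  (forall y, `[0%R, 1%R]%classic y -> c <= g y)%E ->
  (c <= \int[lebesgue_measure]_(y in (`[0%R, 1%R] : set (measurableTypeR R))) g y)%E.
Proof.
move=> c0 mg cg.
have leb01 : lebesgue_measure (`[0%R, 1%R] : set (measurableTypeR R)) = 1%E.
  by rewrite lebesgue_measure_itv /= lte01 -EFinB subr0.
rewrite -[leLHS]mule1 -leb01 -integral_cst //.
by apply: ge0_le_integral.
Qed.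

Theorem lemma1 (R : realType) (eps : R) (P : probability (measurableTypeR R) R) :
  0 <= eps ->
  lipschitz_private eps (additive_mechanism P) ->
  P `<< (@lebesgue_measure R).
Proof.
move=> eps0 privQ; apply/null_content_dominatesP => N mN N0.
pose f y := P ((fun x : measurableTypeR R => (y + x)%R) @^-1` N).
have mf : measurable_fun setT f := measurable_fun_measure_shift P N mN.
have PN_le y : `[0%R, 1%R]%classic y -> (P N <= (expR eps)%:E * f y)%E.
  rewrite /= in_itv /= => /andP[y0 y1].
  apply: le_trans (additive_mechanism_shift_le privQ y N mN) _.
  by apply: lee_wpmul2r => //; rewrite lee_fin ler_expR ger0_norm // ler_piMr.
apply/eqP; rewrite eq_le measure_ge0 andbT.
apply: le_trans (le_integral_itv01 (measure_ge0 P N) _ PN_le) _.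
  by apply: emeasurable_funM => //; exact: measurable_funS mf.
rewrite ge0_integralZl //; last exact: measurable_funS mf.
rewrite -(mule0 (expR eps)%:E) -(integral_measure_shift_null P N mN N0).
by rewrite lee_wpmul2l ?lee_fin ?expR_ge0 // ge0_subset_integral.
Qed.
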